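(* Consider a Gibbs-type feature model with parameters $\alpha<1$, $\theta>-\alpha$ and weights $(V_{n,k})$. Let $\mathbf Z^{(n)}$ be a sample of $n$ individuals with $K_n=k$ observed features $X_1,\dots,X_k$ of frequencies $m_1,\dots,m_k$. Let $Y_{n+1}$ be the number of features displayed by individual $n+1$ that are not among $X_1,\dots,X_k$, and let $A_{n+1,\ell}\in\{0,1\}$ indicate whether individual $n+1$ displays $X_\ell$. Then, for all $y\in\mathbb N_0$ and $(a_1,\dots,a_k)\in\{0,1\}^k$, $$P\big((Y_{n+1},A_{n+1,1},\dots,A_{n+1,k})=(y,a_1,\dots,a_k)\mid \mathbf Z^{(n)}\big)=\binom{k+y}{k}\frac{V_{n+1,k+y}}{V_{n,k}}\{(\theta+\alpha)_n\}^y(\theta+n)^k\prod_{\ell=1}^k\mathscr B\Big(a_\ell;\frac{m_\ell-\alpha}{\theta+n}\Big),$$ where $\mathscr B(a;p)=p^a(1-p)^{1-a}$.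
   Context: Notation: $(x)_m=\Gamma(x+m)/\Gamma(x)$ (Pochhammer symbol); $[n]=\{1,\dots,n\}$. Individuals $i=1,2,\dots$ each display a finite (possibly empty) set of features, identified by almost surely distinct labels. For the sample $\mathbf Z^{(n)}=(Z_1,\dots,Z_n)$ of the first $n$ individuals, $K_n$ is the number of distinct features displayed, labelled $X_1,\dots,X_{K_n}$ in order of appearance; $A_{i,\ell}\in\{0,1\}$ indicates whether individual $i$ displays $X_\ell$, and $m_\ell=\sum_{i=1}^nA_{i,\ell}\in[n]$. The ordered feature allocation is $F_n=(B_{n,1},\dots,B_{n,K_n})$, $B_{n,\ell}=\{i\in[n]:A_{i,\ell}=1\}$. The model admits an exchangeable feature probability function (EFPF) if there are symmetric functions $\pi_n:\bigcup_{k\ge0}[n]^k\to[0,1]$ with $P(F_n=f_n)=\pi_n(m_1,\dots,m_k)$ for every ordered feature allocation $f_n$ of $[n]$ (a sequence of $k$ nonempty subsets of $[n]$ with sizes $m_1,\dots,m_k$), all orderings of the same collection of sets being equally likely; the laws for different $n$ are consistent (the law for $n$ individuals is the marginal of that for $n+1$). The model is a Gibbs-type feature model with parameters $\alpha<1$, $\theta>-\alpha$ if $\pi_n(m_1,\dots,m_k)=V_{n,k}\prod_{\ell=1}^k(1-\alpha)_{m_\ell-1}(\theta+\alpha)_{n-m_\ell}$ for nonnegative weights $(V_{n,k})_{n\ge1,k\ge0}$ satisfying $V_{n,k}=\sum_{j\ge0}\frac{(k+j)!}{j!\,k!}\{(\theta+\alpha)_n\}^j(\theta+n)^kV_{n+1,k+j}$.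 *)

From HB Require Import structures.
From mathcomp Require Import all_boot all_order all_algebra.
From mathcomp Require Import all_classical all_reals all_analysis.
Set Implicit Arguments. Unset Strict Implicit. Unset Printing Implicit Defensive.
Import Order.TTheory GRing.Theory Num.Theory.
Local Open Scope ring_scope.

Definition poch {R : pzRingType} (x : R) (m : nat) : R := \prod_(i < m) (x + i%:R).

(* An ordered feature allocation of [n] = {0,...,n-1} is a sequence of
   nonempty subsets of 'I_n. *)
Definition is_ofa (n : nat) (f : seq {set 'I_n}) : bool := all (fun B => B != finset.set0) f.

Definition gibbs_efpf {R : realType} (alpha theta : R) (V : nat -> nat -> R)
  (n : nat) (ms : seq nat) : R :=
  V n (size ms) * \prod_(m <- ms) (poch (1 - alpha) (m - 1) * poch (theta + alpha) (n - m)%N).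

(* Restriction of a subset of [n+1] to [n] (individual n+1 is ord_max). *)
Definition res_set (n : nat) (B : {set 'I_n.+1}) : {set 'I_n} :=
  [set i : 'I_n | widen_ord (leqnSn n) i \in B].

Definition old_blocks (n : nat) (g : seq {set 'I_n.+1}) : seq {set 'I_n.+1} :=
  [seq B <- g | res_set B != finset.set0].

Definition restrict_ofa (n : nat) (g : seq {set 'I_n.+1}) : seq {set 'I_n} :=
  map (fun B : {set 'I_n.+1} => @res_set n B) (@old_blocks n g).

Definition new_count (n : nat) (g : seq {set 'I_n.+1}) : nat :=
  count (fun B => res_set B == finset.set0) g.

Definition old_indic (n : nat) (g : seq {set 'I_n.+1}) : seq bool :=
  map (fun B : {set 'I_n.+1} => ord_max \in B) (@old_blocks n g).

Definition cond_prob {R : realType} (p : forall n, seq {set 'I_n} -> R) (n : nat)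
  (f : seq {set 'I_n}) (E : set (seq {set 'I_n.+1})) : \bar R :=
  ((\esum_(g in E `&` [set g | restrict_ofa g = f]) (p n.+1 g)%:E)
     * ((p n f)^-1)%:E)%E.

Definition bern {R : pzRingType} (a : bool) (q : R) : R := q ^+ a * (1 - q) ^+ (1 - a).

(* Given F_n = f with K_n = k, an allocation of [n+1] extending f with Y_{n+1} = y and
   A_{n+1} = a has positive probability only if it has no empty block; such allocations are
   exactly the interleavings of y copies of the singleton {n+1} with the k lifted blocks
   (B_l, with n+1 added iff a_l = 1), so there are C(k+y, k) of them and all share the
   same EFPF.
   Each new singleton contributes (theta+alpha)_n, and a lifted block of size m_l + a_l
   contributes (theta+n) B(a_l; (m_l-alpha)/(theta+n)) times its factor in pi_n(m_1..m_k);
   dividing by pi_n(m_1..m_k) leaves the stated formula. *)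

From HB Require Import structures.
From mathcomp Require Import all_boot all_order all_algebra.
From mathcomp Require Import all_classical all_reals all_analysis.
From mathcomp Require Import ring lra.
Import Order.TTheory GRing.Theory Num.Theory.
Import numFieldNormedType.Exports.

Set Implicit Arguments. Unset Strict Implicit. Unset Printing Implicit Defensive.
Local Open Scope ring_scope.

Section Insertions.
Variable T : eqType.
Implicit Types (x : T) (s g : seq T).

Fixpoint insertions x (y : nat) s : seq (seq T) :=
  if s is B :: s' then
    (fix ins_y y := (if y is y'.+1 then map (cons x) (ins_y y') else [::])
                    ++ map (cons B) (insertions x y s')) y
  else [:: nseq y x].

Lemma insertions_cons x y B s : insertions x y (B :: s) =
  (if y is y'.+1 then map (cons x) (insertions x y' (B :: s)) else [::])
  ++ map (cons B) (insertions x y s).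
Proof. by case: y. Qed.

Lemma mem_map_cons (z B : T) g (r : seq (seq T)) :
  (z :: g \in map (cons B) r) = (z == B) && (g \in r).
Proof.
apply/mapP/andP => [[h hr [-> ->]]|[/eqP -> gr]]; last by exists g.
by rewrite eqxx.
Qed.

Lemma mem_insertions x y s g : x \notin s ->
  (g \in insertions x y s) = (seq.filter (predC1 x) g == s) && (count_mem x g == y).
Proof.
elim: g y s => [|z g IHg] y s xs.
  case: s xs => [|B s] _; first by case: y.
  rewrite insertions_cons mem_cat; apply/negbTE/norP; split.
    by case: y => // y; apply/negP => /mapP [].
  by apply/negP => /mapP [].
have [-> {z}|zx] := eqVneq z x.
  rewrite /= eqxx /= add1n; case: s xs => [|B s] xs.
    case: y => [|y]; first by rewrite inE andbF.
    by rewrite eqSS -IHg // !inE eqseq_cons eqxx.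
  move: xs; rewrite inE negb_or => /andP [xB xs].
  rewrite insertions_cons mem_cat mem_map_cons (negbTE xB) orbF.
  by case: y => [|y]; rewrite ?andbF // mem_map_cons eqxx IHg ?inE ?negb_or ?xB // eqSS.
rewrite /= (negbTE zx) add0n; case: s xs => [|B s] xs.
  by case: y => [|y]; rewrite inE ?eqseq_cons ?(negbTE zx).
move: xs; rewrite inE negb_or => /andP [xB xs].
rewrite insertions_cons mem_cat mem_map_cons IHg // eqseq_cons andbA.
by case: y => [|y]; rewrite ?mem_map_cons ?(negbTE zx).
Qed.

Lemma uniq_insertions x y s : x \notin s -> uniq (insertions x y s).
Proof.
have cons_inj (B : T) : injective (cons B) by move=> ? ? [].
elim: s y => [|B s IHs] y //; rewrite inE negb_or => /andP [xB xs].
elim: y => [|y IHy]; rewrite insertions_cons ?map_inj_uniq ?IHs //.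
rewrite cat_uniq !map_inj_uniq ?IHy ?IHs //= andbT.
apply/hasPn => _ /mapP [h _ ->]; apply/negP => /mapP [h' _ [xB']].
by rewrite xB' eqxx in xB.
Qed.

Lemma size_insertions x y s : size (insertions x y s) = 'C(size s + y, size s).
Proof.
elim: s y => [|B s IHs] y; first by rewrite bin0.
elim: y => [|y IHy]; first by rewrite insertions_cons /= size_map IHs !addn0 !binn.
rewrite insertions_cons size_cat !size_map IHy IHs /= addSnnS -binS.
by rewrite addSn.
Qed.

Lemma prod_count_filter (R : comPzSemiRingType) (w : T -> R) x g :
  \prod_(B <- g) w B = w x ^+ count_mem x g * \prod_(B <- seq.filter (predC1 x) g) w B.
Proof.
rewrite (bigID (pred1 x)) big_filter; congr (_ * _).
by rewrite (eq_bigr (fun=> w x)) => [|B /eqP ->//]; rewrite big_const_seq iter_mulr_1.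
Qed.

Lemma size_mem_insertions x y s g : x \notin s -> g \in insertions x y s ->
  size g = (size s + y)%N.
Proof.
move=> xs; rewrite mem_insertions // => /andP [/eqP <- /eqP <-].
by rewrite size_filter addnC count_predC.
Qed.

Lemma prod_mem_insertions (R : comPzSemiRingType) (w : T -> R) x y s g :
  x \notin s -> g \in insertions x y s -> \prod_(B <- g) w B = w x ^+ y * \prod_(B <- s) w B.
Proof.
move=> xs; rewrite mem_insertions // => /andP [/eqP <- /eqP <-].
exact: prod_count_filter.
Qed.

End Insertions.

Lemma poch0 (R : pzRingType) (x : R) : poch x 0 = 1.
Proof. exact: big_ord0. Qed.

Lemma pochS (R : pzRingType) (x : R) m : poch x m.+1 = poch x m * (x + m%:R).
Proof. exact: big_ord_recr. Qed.

Lemma poch_ge0 (R : numDomainType) (x : R) m : 0 <= x -> 0 <= poch x m.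
Proof. by move=> x0; apply: prodr_ge0 => i _; rewrite addr_ge0. Qed.

Section GibbsWeights.
Variables (R : realType) (alpha theta : R).

Definition feature_weight (n m : nat) : R :=
  poch (1 - alpha) (m - 1) * poch (theta + alpha) (n - m).

Lemma gibbs_efpfE V n ms :
  gibbs_efpf alpha theta V n ms = V n (size ms) * \prod_(m <- ms) feature_weight n m.
Proof. by []. Qed.

Lemma feature_weight_ge0 n m : alpha < 1 -> - alpha < theta -> 0 <= feature_weight n m.
Proof. by move=> a1 ta; rewrite mulr_ge0 // poch_ge0 //; lra. Qed.

Lemma feature_weight_single n : feature_weight n.+1 1 = poch (theta + alpha) n.
Proof. by rewrite /feature_weight subnn poch0 mul1r subn1. Qed.

Lemma feature_weight_lift n m (b : bool) : (0 < m)%N -> (m <= n)%N -> theta + n%:R != 0 ->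
  feature_weight n.+1 (m + b) =
  (theta + n%:R) * bern b ((m%:R - alpha) / (theta + n%:R)) * feature_weight n m.
Proof.
case: m => // m _ mn tn; rewrite /feature_weight /bern; case: b => /=.
  by rewrite addn1 !subSS !subn0 pochS expr1 expr0 mulr1 -addn1 natrD; field.
rewrite addn0 !subSS !subn0 expr0 expr1 mul1r -(subnSK mn) pochS natrB //.
by rewrite -addn1 natrD; field.
Qed.

End GibbsWeights.

Section LiftToNextIndividual.
Variable n : nat.
Local Notation block := {set 'I_n.+1}.
Local Notation max_block := ([set ord_max] : block).

Lemma widen_ord_max (j : 'I_n) : widen_ord (leqnSn n) j = lift ord_max j.
Proof. by apply: val_inj; rewrite /= /bump leqNgt ltn_ord. Qed.

Lemma in_res_set (B : block) j : (j \in res_set B) = (lift ord_max j \in B).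
Proof. by rewrite inE widen_ord_max. Qed.

Lemma card_res_set (B : block) : #|B| = (#|res_set B| + (ord_max \in B))%N.
Proof.
rewrite -!sum1_card big_mkcond big_ord_recr /= [in RHS]big_mkcond /=.
by apply: congr2; [apply: eq_bigr => j _; rewrite inE | case: (_ \in B)].
Qed.

Lemma res_set_eq0 (B : block) : (res_set B == finset.set0) = (B \subset max_block).
Proof.
apply/eqP/fintype.subsetP => [B0 i iB|Bmax].
  case: (unliftP ord_max i) => [j Ei|->]; last by rewrite inE.
  by have := finset.in_set0 j; rewrite -B0 in_res_set -Ei iB.
apply/setP => j; rewrite in_res_set finset.in_set0; apply/negP => /Bmax.
by rewrite inE eq_sym (negbTE (neq_lift _ _)).
Qed.

Lemma res_set_eq0_nonempty (B : block) : B != finset.set0 ->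
  (res_set B == finset.set0) = (B == max_block).
Proof. by move=> B0; rewrite res_set_eq0 subset1 (negbTE B0) orbF. Qed.

Lemma res_set0 : res_set (finset.set0 : block) = finset.set0.
Proof. by apply/eqP; rewrite res_set_eq0 finset.sub0set. Qed.

Lemma res_set_max : res_set max_block = finset.set0.
Proof. by apply/eqP; rewrite res_set_eq0. Qed.

Definition lift_block (F : {set 'I_n}) (b : bool) : block :=
  [set i | if unlift ord_max i is Some j then j \in F else b].

Lemma res_lift_block F b : res_set (lift_block F b) = F.
Proof. by apply/setP => j; rewrite in_res_set inE liftK. Qed.

Lemma max_in_lift_block F b : (ord_max \in lift_block F b) = b.
Proof. by rewrite inE unlift_none. Qed.

Lemma lift_block_res (B : block) : lift_block (res_set B) (ord_max \in B) = B.
Proof.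
by apply/setP => i; rewrite inE; case: (unliftP ord_max i) => [j ->|->] //; rewrite in_res_set.
Qed.

Lemma card_lift_block F b : #|lift_block F b| = (#|F| + b)%N.
Proof. by rewrite card_res_set res_lift_block max_in_lift_block. Qed.

Definition lift_blocks (f : seq {set 'I_n}) (a : seq bool) : seq block :=
  mkseq (fun l => lift_block (nth finset.set0 f l) (nth false a l)) (size f).

Lemma lift_blocksP f a (h : seq block) : size a = size f ->
  h = lift_blocks f a <->
  [seq res_set B | B <- h] = f /\ [seq ord_max \in B | B : block <- h] = a.
Proof.
move=> size_a; split => [->|[<- <-]].
  split; [rewrite -[RHS](mkseq_nth finset.set0) | rewrite -[RHS](mkseq_nth false) size_a];
  by rewrite -map_comp; apply: eq_mkseq => l /=; rewrite ?res_lift_block ?max_in_lift_block.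
rewrite /lift_blocks size_map -[LHS](mkseq_nth finset.set0); apply: eq_mkseq => l.
case: (ltnP l (size h)) => [lh|hl]; first by rewrite !(nth_map finset.set0) ?lift_block_res.
rewrite !nth_default ?size_map //.
by apply/setP => i; rewrite !inE; case: (unliftP ord_max i) => [j|] _; rewrite ?finset.in_set0.
Qed.

Lemma size_lift_blocks f a : size (lift_blocks f a) = size f.
Proof. exact: size_mkseq. Qed.

Lemma res_set_mem_lift_blocks f a B : is_ofa f -> size a = size f ->
  B \in lift_blocks f a -> res_set B != finset.set0.
Proof.
move=> f0 size_a BL.
have [/(_ erefl) [res_lift _] _] := lift_blocksP (lift_blocks f a) size_a.
by apply: (allP f0); rewrite -res_lift map_f.
Qed.

Lemma max_block_notin_lift_blocks f a : is_ofa f -> size a = size f ->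
  max_block \notin lift_blocks f a.
Proof.
move=> f0 size_a; apply/negP => /(res_set_mem_lift_blocks f0 size_a).
by rewrite res_set_max eqxx.
Qed.

Lemma is_ofa_mem_insertions f a y g : is_ofa f -> size a = size f ->
  g \in insertions max_block y (lift_blocks f a) -> is_ofa g.
Proof.
move=> f0 size_a; rewrite mem_insertions ?max_block_notin_lift_blocks //.
case/andP => /eqP g_lift _; apply/allP => B Bg; have [->|BNmax] := eqVneq B max_block.
  by apply/set0Pn; exists ord_max; rewrite inE.
have : B \in lift_blocks f a by rewrite -g_lift mem_filter /= BNmax.
by move/(res_set_mem_lift_blocks f0 size_a); apply: contraNneq => ->; rewrite res_set0.
Qed.

Lemma old_blocks_ofa (g : seq block) : is_ofa g ->
  old_blocks g = seq.filter (predC1 max_block) g.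
Proof.
by move/allP => g0; apply: eq_in_filter => B /g0 B0; rewrite /= res_set_eq0_nonempty.
Qed.

Lemma new_count_ofa (g : seq block) : is_ofa g -> new_count g = count_mem max_block g.
Proof. by move/allP => g0; apply: eq_in_count => B /g0 B0; rewrite /= res_set_eq0_nonempty. Qed.

Lemma extending_ofa_insertions f a y : is_ofa f -> size a = size f ->
  ([set g | new_count g = y /\ old_indic g = a] `&` [set g | restrict_ofa g = f]
    `&` [set g | is_ofa g] = [set` insertions max_block y (lift_blocks f a)])%classic.
Proof.
move=> f0 size_a; have max_notin := max_block_notin_lift_blocks f0 size_a.
apply/seteqP; split => g /=.
  move=> [[[gy ga] gf] g0]; rewrite mem_insertions //; apply/andP; split; apply/eqP.
    by rewrite -old_blocks_ofa //; apply/lift_blocksP.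
  by rewrite -new_count_ofa.
move=> g_ins; have g0 := is_ofa_mem_insertions f0 size_a g_ins.
move: g_ins; rewrite mem_insertions // => /andP [/eqP g_lift /eqP <-].
rewrite new_count_ofa // /old_indic /restrict_ofa old_blocks_ofa // g_lift.
by have [/(_ erefl) [-> ->] _] := lift_blocksP (lift_blocks f a) size_a.
Qed.

End LiftToNextIndividual.

Lemma sum_gibbs_efpf_insertions (R : realType) (alpha theta : R) V n f a y :
  is_ofa f -> size a = size f -> theta + n%:R != 0 ->
  \sum_(g <- insertions [set ord_max] y (lift_blocks f a))
     gibbs_efpf alpha theta V n.+1 [seq #|B| | B : {set 'I_n.+1} <- g] =
  'C(size f + y, size f)%:R * V n.+1 (size f + y)%N * poch (theta + alpha) n ^+ y
  * (theta + n%:R) ^+ size f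
  * \prod_(l < size f) bern (nth false a l) ((#|nth finset.set0 f l|%:R - alpha) / (theta + n%:R))
  * \prod_(l < size f) feature_weight alpha theta n #|nth finset.set0 f l|.
Proof.
move=> f0 size_a tn; have max_notin := max_block_notin_lift_blocks f0 size_a.
rewrite (eq_big_seq (fun=> V n.+1 (size f + y)%N * (poch (theta + alpha) n ^+ y
   * \prod_(B <- lift_blocks f a) feature_weight alpha theta n.+1 #|B|))) => [|g g_ins]; last first.
  rewrite gibbs_efpfE size_map big_map (size_mem_insertions max_notin g_ins) size_lift_blocks.
  by rewrite (prod_mem_insertions _ max_notin g_ins) cards1 feature_weight_single.
rewrite big_const_seq count_predT iter_addr_0 size_insertions size_lift_blocks.
rewrite /lift_blocks big_map.
have -> : iota 0 (size f) = index_iota 0 (size f) by rewrite /index_iota subn0.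
rewrite big_mkord (eq_bigr (fun l : 'I_(size f) =>
  (theta + n%:R) * bern (nth false a l) ((#|nth finset.set0 f l|%:R - alpha) / (theta + n%:R))
  * feature_weight alpha theta n #|nth finset.set0 f l|)) => [|l _]; last first.
  have fl0 : nth finset.set0 f l != finset.set0 by apply: (allP f0); rewrite mem_nth.
  rewrite card_lift_block feature_weight_lift // ?card_gt0 //.
  by rewrite -[X in (_ <= X)%N](card_ord n) max_card.
rewrite !big_split /= prodr_const card_ord -mulr_natr; ring.
Qed.

Section ExtendedSums.
Local Open Scope classical_set_scope.
Variables (R : realType) (T : choiceType).
Implicit Types (S O : set T) (u : T -> \bar R).

Lemma esum_setI_support S O u : (forall x, S x -> (0 <= u x)%E) ->
  (forall x, S x -> ~ O x -> u x = 0%E) -> \esum_(x in S) u x = \esum_(x in S `&` O) u x.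
Proof.
move=> u0 uO; rewrite (esumID O) // (@esum1 _ _ (S `&` ~` O)) ?adde0 //.
by move=> x [Sx NOx]; exact: uO.
Qed.

Lemma esum_seq (s : seq T) u : uniq s -> (forall x, x \in s -> (0 <= u x)%E) ->
  \esum_(x in [set` s]) u x = (\sum_(x <- s) u x)%E.
Proof.
move=> s_uniq u0; rewrite esum_fset; first exact/esym/fsbig_seq.
  exact: finite_seq.
by move=> x /set_mem; exact: u0.
Qed.

End ExtendedSums.

Local Open Scope classical_set_scope.

Theorem theorem1 (R : realType) (alpha theta : R) (V : nat -> nat -> R)
  (p : forall n : nat, seq {set 'I_n} -> R)
  (halpha : alpha < 1) (htheta : - alpha < theta)
  (hV0 : forall n k, (0 < n)%N -> 0 <= V n k)
  (hVrec : forall n k, (0 < n)%N ->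
     (fun N : nat => \sum_(j < N)
        ('C(k + j, k)%:R * (poch (theta + alpha) n) ^+ j * (theta + n%:R) ^+ k
          * V n.+1 (k + j)%N)) @ \oo --> V n k)
  (hEFPF : forall n (f : seq {set 'I_n}), (0 < n)%N ->
     p n f = if is_ofa f then gibbs_efpf alpha theta V n (map (fun B : {set 'I_n} => #|B|) f) else 0)
  (hprob : forall n, (0 < n)%N -> \esum_(f in [set: seq {set 'I_n}]) (p n f)%:E = 1%E)
  (hcons : forall n (f : seq {set 'I_n}), (0 < n)%N ->
     (p n f)%:E = \esum_(g in [set g | restrict_ofa g = f]) (p n.+1 g)%:E)
  (n : nat) (hn : (0 < n)%N) (f : seq {set 'I_n}) (hf : 0 < p n f)
  (y : nat) (a : seq bool) (ha : size a = size f) :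
  cond_prob p f [set g | new_count g = y /\ old_indic g = a] =
  ('C(size f + y, size f)%:R * (V n.+1 (size f + y)%N / V n (size f))
     * (poch (theta + alpha) n) ^+ y * (theta + n%:R) ^+ (size f)
     * \prod_(l < size f)
         bern (nth false a l) ((#|nth finset.set0 f l|%:R - alpha) / (theta + n%:R)))%:E.
Proof.
have f0 : is_ofa f by move: hf; rewrite hEFPF //; case: is_ofa; rewrite ?ltxx.
have tn : theta + n%:R != 0.
  have : (1 : R) <= n%:R by rewrite ler1n.
  by move=> ?; apply: lt0r_neq0; lra.
have pnf : p n f =
    V n (size f) * \prod_(l < size f) feature_weight alpha theta n #|nth finset.set0 f l|.
  by rewrite hEFPF // f0 gibbs_efpfE size_map big_map (big_nth finset.set0) big_mkord.
have /andP [V0 Q0] : (V n (size f) != 0) && (\prod_(l < size f)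
    feature_weight alpha theta n #|nth finset.set0 f l| != 0).
  by rewrite -negb_or -mulf_eq0 -pnf lt0r_neq0.
have p_ge0 g : 0 <= p n.+1 g.
  rewrite hEFPF //; case: is_ofa => //; rewrite gibbs_efpfE mulr_ge0 ?hV0 ?prodr_ge0 //.
  by move=> m _; exact: feature_weight_ge0.
rewrite /cond_prob (esum_setI_support (O := [set g | is_ofa g])); last 2 first.
- by move=> g _; rewrite lee_fin.
- by move=> g _ /negP/negbTE g0; rewrite hEFPF // g0.
rewrite extending_ofa_insertions // esum_seq; last 2 first.
- exact/uniq_insertions/max_block_notin_lift_blocks.
- by move=> g _; rewrite lee_fin.
rewrite sumEFin -EFinM (eq_big_seq (fun g =>
  gibbs_efpf alpha theta V n.+1 [seq #|B| | B : {set 'I_n.+1} <- g])).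
  by rewrite sum_gibbs_efpf_insertions // pnf; congr (_%:E); field; apply/andP.
by move=> g /(is_ofa_mem_insertions f0 ha) g0; rewrite hEFPF // g0.
Qed.
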